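(* Let $a_0,a_1,\ldots\in\mathbb{R}$ satisfy $\sum_{j=0}^\infty|a_j|<\infty$. Then the series $f(x)=\sum_{j=0}^\infty 2^{j-1}a_jQ_j(x)$ converges absolutely for every $x\in[-1,1]$, and for every integer $D\ge1$, \[ \Big(\frac12\sum_{k=D}^\infty\frac{a_k^2}{k}\Big)^{1/2}\le \inf_{p\in\mathcal{P}_{D-1}}\ \sup_{x\in[-1,1]}|p(x)-f(x)|\le\sum_{j=D}^\infty|a_j|. \]
   Context: $\mathcal{P}_d$ denotes the set of real polynomials in one variable of degree at most $d$. The monic Chebyshev polynomials $Q_d\in\mathcal{P}_d$ are defined by $Q_0(x)=1$ and, for $d\ge1$, by the requirement $Q_d(\cos\theta)=2^{1-d}\cos(d\theta)$ for all $\theta\in[0,2\pi]$. *)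

From HB Require Import structures.
From mathcomp Require Import all_boot all_order all_algebra.
From mathcomp Require Import all_classical all_reals all_analysis.
From mathcomp Require Import ring lra zify.
Set Implicit Arguments. Unset Strict Implicit. Unset Printing Implicit Defensive.
Import Order.TTheory GRing.Theory Num.Theory.
Local Open Scope ring_scope.

Section Cheb.
Variable R : realType.

Fixpoint chebT_pair (n : nat) : {poly R} * {poly R} :=
  match n with
  | 0 => (1, 'X)
  | n.+1 => let pq := chebT_pair n in (pq.2, 2%:P * 'X * pq.2 - pq.1)
  end.

Definition chebT (n : nat) : {poly R} := (chebT_pair n).1.

(* Monic Chebyshev polynomials: Q_0 = 1, Q_d = 2^(1-d) T_d for d >= 1. *)
Definition chebQ (d : nat) : {poly R} :=
  if d is 0 then 1 else (2 / 2 ^+ d) *: chebT d.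

Lemma chebT_pair_snd n : (chebT_pair n).2 = chebT n.+1.
Proof. by []. Qed.

Lemma chebT_SS n : chebT n.+2 = 2%:P * 'X * chebT n.+1 - chebT n.
Proof. by []. Qed.

Lemma chebT_cos n (t : R) : (chebT n).[cos t] = cos (n%:R * t).
Proof.
suff H : (chebT n).[cos t] = cos (n%:R * t) /\
         (chebT n.+1).[cos t] = cos (n.+1%:R * t) by case: H.
elim: n => [|n [IH1 IH2]].
  by rewrite /chebT /= hornerC hornerX mul0r cos0 mul1r.
split=> //.
rewrite chebT_SS hornerD hornerN !hornerM hornerX hornerC IH1 IH2.
have -> : n.+2%:R * t = n.+1%:R * t + t by rewrite -natr1 mulrDl mul1r.
have -> : n%:R * t = n.+1%:R * t - t by rewrite -natr1 mulrDl mul1r addrK.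
rewrite !cosD cosN sinN; ring.
Qed.

Lemma chebQ_cos d (t : R) : (0 < d)%N ->
  (chebQ d).[cos t] = 2 / 2 ^+ d * cos (d%:R * t).
Proof. by case: d => // d _; rewrite /chebQ hornerZ chebT_cos. Qed.

Lemma size_chebT n : (size (chebT n) <= n.+1)%N.
Proof.
suff H : (size (chebT n) <= n.+1)%N /\ (size (chebT n.+1) <= n.+2)%N by case: H.
elim: n => [|n [IH1 IH2]].
  by rewrite /chebT /= size_poly1 size_polyX.
split=> //; rewrite chebT_SS.
apply: (leq_trans (size_polyD _ _)); rewrite geq_max; apply/andP; split.
  have h1 := size_polyMleq (2%:P * 'X) (chebT n.+1).
  have h2 := size_polyMleq (2%:P : {poly R}) 'X.
  have h3 : (size (2%:P : {poly R}) <= 1)%N := size_polyC_leq1 _.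
  rewrite size_polyX in h2; lia.
rewrite size_polyN; exact: (leq_trans IH1 (leq_trans (leqnSn _) (leqnSn _))).

Qed.

Lemma size_chebQ d : (size (chebQ d) <= d.+1)%N.
Proof.
case: d => [|d]; first by rewrite /chebQ size_poly1.
exact: leq_trans (size_scale_leq _ _) (size_chebT _).
Qed.

End Cheb.

(* Truncating the series at degree D - 1 gives the upper bound, since on [-1, 1]
   the j-th term equals a_j T_j (halved for j = 0) and |T_j| <= 1.
   For the lower bound substitute x = cos t.  If deg p < D and |p - f| <= M on
   [-1, 1], then p(cos t) minus the N-th partial sum is a cosine polynomial of order
   N whose k-th coefficient is -a_k for D <= k < N, and it is bounded by M plus the
   tail of sum |a_j| from N on.  At the N Chebyshev nodes the cosines cos (j t),
   j < N, are orthogonal with squared norms at least N / 2, so sampling there gives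
   sum_(D <= k < N) a_k^2 <= 2 (M + tail)^2.  Letting N go to infinity yields
   sum_(k >= D) a_k^2 <= 2 M^2, which is even stronger than needed since
   a_k^2 / k <= a_k^2. *)

From HB Require Import structures.
From mathcomp Require Import all_boot all_order all_algebra.
From mathcomp Require Import all_classical all_reals all_analysis.
From mathcomp Require Import ring lra zify.
Import Order.TTheory GRing.Theory Num.Theory numFieldNormedType.Exports.
Local Open Scope classical_set_scope.
Local Open Scope ring_scope.

Section discrete_cosine_orthogonality.
Context {R : realType}.

Lemma sin_natrMpi (l : nat) : sin (l%:R * pi) = 0 :> R.
Proof.
elim: l => [|l IH]; first by rewrite mul0r sin0.
by rewrite -natr1 mulrDl mul1r sinDpi IH oppr0.
Qed.

Lemma cosM_natr (j k : nat) (t : R) : (k <= j)%N ->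
  cos (j%:R * t) * cos (k%:R * t) =
  (cos ((j + k)%:R * t) + cos ((j - k)%:R * t)) / 2.
Proof. by move=> kj; rewrite natrD natrB // !mulrDl mulNr !cosD cosN sinN; field. Qed.

(* The Chebyshev nodes of order N, as angles: T_N vanishes at cos (cheb_node N m). *)
Definition cheb_node (N m : nat) : R := (2 * m + 1)%:R * pi / (2 * N)%:R.

Lemma sum_cos_cheb_node (N l : nat) : (0 < l < 2 * N)%N ->
  \sum_(m < N) cos (l%:R * cheb_node N m) = 0.
Proof.
move=> /andP[l_gt0 lN].
set phi : R := l%:R * pi / (2 * N)%:R.
have N2_neq0 : (2 * N)%:R != 0 :> R by rewrite pnatr_eq0; lia.
have sin_phi_gt0 : 0 < sin phi.
  apply: sin_gt0_pi; apply/andP; split.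
    by rewrite divr_gt0 ?mulr_gt0 ?pi_gt0 // ltr0n; lia.
  rewrite ltr_pdivrMr ?ltr0n; last lia.
  by rewrite mulrC ltr_pM2l ?pi_gt0 // ltr_nat.
(* 2 sin phi cos ((2m+1) phi) = sin ((2m+2) phi) - sin (2m phi) telescopes. *)
have telescope : \sum_(0 <= m < N) 2 * sin phi * cos ((2 * m + 1)%:R * phi)
    = sin ((2 * N)%:R * phi) - sin ((2 * 0)%:R * phi).
  apply: (telescope_sumr_eq (fun m => sin ((2 * m)%:R * phi))) => // k _.
  have -> : ((2 * k.+1)%:R : R) = (2 * k + 1)%:R + 1.
    by rewrite (_ : 2 * k.+1 = 2 * k + 1 + 1)%N ?natrD //; lia.
  have -> : ((2 * k)%:R : R) = (2 * k + 1)%:R - 1 by rewrite natrD addrK.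
  rewrite !mulrDl mulNr !mul1r !sinD sinN cosN; ring.
have sin_2Nphi : sin ((2 * N)%:R * phi) = 0.
  by rewrite /phi mulrCA divff ?mulr1 ?sin_natrMpi.
rewrite sin_2Nphi muln0 mul0r sin0 subr0 big_mkord -mulr_sumr in telescope.
move/eqP: telescope.
rewrite mulf_eq0 mulf_eq0 pnatr_eq0 (gt_eqF sin_phi_gt0) /= => /eqP sum_eq0.
rewrite -[RHS]sum_eq0; apply: eq_bigr => m _.
by rewrite /cheb_node /phi; congr cos; ring.
Qed.

Definition cos_gram (N j k : nat) : R :=
  \sum_(m < N) cos (j%:R * cheb_node N m) * cos (k%:R * cheb_node N m).

Lemma cos_gram_eq0 (N j k : nat) : (j < N)%N -> (k < N)%N -> j != k ->
  cos_gram N j k = 0.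
Proof.
wlog kj : j k / (k < j)%N.
  move=> wlog_kj jN kN jk; case: (ltngtP k j) => [kj|lt_jk|kj]; first exact: wlog_kj.
  - rewrite /cos_gram (eq_bigr _ (fun m _ => mulrC _ _)).
    by apply: wlog_kj; rewrite // eq_sym.
  - by move: jk; rewrite kj eqxx.
move=> jN kN _; rewrite /cos_gram.
under eq_bigr do rewrite cosM_natr ?(ltnW kj) //.
by rewrite -mulr_suml big_split /= !sum_cos_cheb_node ?addr0 ?mul0r //; lia.
Qed.

Lemma cos_gram_diag_ge (N j : nat) : (j < N)%N -> N%:R / 2 <= cos_gram N j j.
Proof.
move=> jN; rewrite /cos_gram.
under eq_bigr do rewrite cosM_natr // subnn mul0r cos0.
rewrite -mulr_suml big_split /= sumr_const card_ord ler_pM2r //.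
case: j jN => [|j] jN.
  by rewrite lerDr sumr_ge0 // => m _; rewrite mul0r cos0.
by rewrite sum_cos_cheb_node ?add0r //; lia.
Qed.

Lemma sum_sqr_cos_sum_cheb_node (N : nat) (c : nat -> R) :
  \sum_(m < N) (\sum_(j < N) c j * cos (j%:R * cheb_node N m)) ^+ 2 =
  \sum_(j < N) c j ^+ 2 * cos_gram N j j.
Proof.
transitivity (\sum_(j < N) \sum_(k < N) c j * c k * cos_gram N j k).
  rewrite /cos_gram; under eq_bigr do rewrite expr2 mulr_suml.
  rewrite exchange_big; apply: eq_bigr => j _.
  under eq_bigr do rewrite mulr_sumr.
  rewrite exchange_big; apply: eq_bigr => k _.
  by rewrite mulr_sumr; apply: eq_bigr => m _; ring.
apply: eq_bigr => j _; rewrite (bigD1 j) //= big1 ?addr0 ?expr2 // => k kj.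
by rewrite cos_gram_eq0 ?mulr0 // eq_sym.
Qed.

Lemma sum_sqr_le_cos_sum_bound (n : nat) (c : nat -> R) (B : R) :
  (forall t, `|\sum_(j < n) c j * cos (j%:R * t)| <= B) ->
  \sum_(j < n) c j ^+ 2 <= 2 * B ^+ 2.
Proof.
case: n => [|N] cB; first by rewrite big_ord0 mulr_ge0 ?sqr_ge0.
have N_gt0 : 0 < (N.+1%:R : R) by rewrite ltr0n.
have nodes_le : \sum_(m < N.+1)
    (\sum_(j < N.+1) c j * cos (j%:R * cheb_node N.+1 m)) ^+ 2 <= N.+1%:R * B ^+ 2.
  have node_le m : (\sum_(j < N.+1) c j * cos (j%:R * cheb_node N.+1 m)) ^+ 2 <= B ^+ 2.
    by have /ler_normlP[] := cB (cheb_node N.+1 m); nra.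
  apply: (@le_trans _ _ (\sum_(m < N.+1) B ^+ 2)); first exact: ler_sum.
  by rewrite sumr_const card_ord mulr_natl.
rewrite sum_sqr_cos_sum_cheb_node in nodes_le.
have gram_ge : N.+1%:R / 2 * \sum_(j < N.+1) c j ^+ 2 <=
    \sum_(j < N.+1) c j ^+ 2 * cos_gram N.+1 j j.
  rewrite mulr_sumr; apply: ler_sum => j _.
  by rewrite mulrC ler_wpM2l ?sqr_ge0 // cos_gram_diag_ge.
move: (le_trans gram_ge nodes_le); set S := \sum_(j < _) _; nra.
Qed.

End discrete_cosine_orthogonality.

Section cosine_polynomials.
Context {R : realType}.
Implicit Types (n : nat) (h : R -> R).

Definition cos_poly n h :=
  exists c : nat -> R, forall t, h t = \sum_(j < n) c j * cos (j%:R * t).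

Lemma cos_poly_ext n h1 h2 : h1 =1 h2 -> cos_poly n h1 -> cos_poly n h2.
Proof. by move=> h12 [c hc]; exists c => t; rewrite -h12. Qed.

Lemma cos_poly_widen n m h : (n <= m)%N -> cos_poly n h -> cos_poly m h.
Proof.
move=> nm [c hc]; exists (fun j => if (j < n)%N then c j else 0) => t.
rewrite hc (big_ord_widen m (fun j => c j * cos (j%:R * t)) nm) big_mkcond /=.
by apply: eq_bigr => j _; case: ifP; rewrite ?mul0r.
Qed.

Lemma cos_polyZ n (k : R) h : cos_poly n h -> cos_poly n (fun t => k * h t).
Proof.
move=> [c hc]; exists (fun j => k * c j) => t.
by rewrite hc mulr_sumr; apply: eq_bigr => j _; rewrite mulrA.
Qed.

Lemma cos_polyD n h1 h2 :
  cos_poly n h1 -> cos_poly n h2 -> cos_poly n (fun t => h1 t + h2 t).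
Proof.
move=> [c1 hc1] [c2 hc2]; exists (fun j => c1 j + c2 j) => t.
by rewrite hc1 hc2 -big_split; apply: eq_bigr => j _; rewrite mulrDl.
Qed.

Lemma cos_poly_sum n m (F : nat -> R -> R) :
  (forall i, (i < m)%N -> cos_poly n (F i)) ->
  cos_poly n (fun t => \sum_(i < m) F i t).
Proof.
elim: m => [|m IH] F_cos.
  by exists (fun _ => 0) => t; rewrite big_ord0 big1 // => j _; rewrite mul0r.
apply: (@cos_poly_ext _ (fun t => \sum_(i < m) F i t + F m t)).
  by move=> t; rewrite big_ord_recr.
by apply: cos_polyD; [apply: IH => i im; apply: F_cos; lia | apply: F_cos].
Qed.

Lemma cos_poly_cos n k : (k < n)%N -> cos_poly n (fun t => cos (k%:R * t)).
Proof.
move=> kn; exists (fun j => (j == k)%:R) => t.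
rewrite (bigD1 (Ordinal kn)) //= eqxx mul1r big1 ?addr0 // => j.
by rewrite -val_eqE /= => /negbTE ->; rewrite mul0r.
Qed.

Lemma cos_poly_mulcos n h : cos_poly n h -> cos_poly n.+1 (fun t => cos t * h t).
Proof.
move=> [c hc].
apply: (@cos_poly_ext _ (fun t => \sum_(j < n) c j * (cos (j%:R * t) * cos (1%:R * t)))).
  by move=> t; rewrite hc mulr_sumr mul1r; apply: eq_bigr => j _; ring.
apply: (@cos_poly_sum _ _ (fun j t => c j * (cos (j%:R * t) * cos (1%:R * t)))).
move=> -[|j] jn; apply: cos_polyZ.
  apply: (@cos_poly_ext _ (fun t => cos (1%:R * t))); last by apply: cos_poly_cos; lia.
  by move=> t; rewrite mul0r cos0 mul1r.
apply: (@cos_poly_ext _ (fun t => 2^-1 * cos (j.+2%:R * t) + 2^-1 * cos (j%:R * t))).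
  by move=> t; rewrite cosM_natr // addn1 subn1 /=; field.
by apply: cos_polyD; apply: cos_polyZ; apply: cos_poly_cos; lia.
Qed.

Lemma cos_poly_expcos i : cos_poly i.+1 (fun t => cos t ^+ i).
Proof.
elim: i => [|i IH].
  apply: (@cos_poly_ext _ (fun t => cos (0%:R * t))); last exact: cos_poly_cos.
  by move=> t; rewrite mul0r cos0.
apply: (@cos_poly_ext _ (fun t => cos t * cos t ^+ i)); last exact: cos_poly_mulcos.
by move=> t; rewrite exprS.
Qed.

Lemma cos_poly_horner (q : {poly R}) n : (size q <= n)%N ->
  cos_poly n (fun t => q.[cos t]).
Proof.
move=> qn; apply: (@cos_poly_ext _ (fun t => \sum_(i < size q) q`_i * cos t ^+ i)).
  by move=> t; rewrite horner_coef.
apply: (@cos_poly_sum _ _ (fun i t => q`_i * cos t ^+ i)) => i isq; apply: cos_polyZ.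
by apply: cos_poly_widen (cos_poly_expcos i); lia.
Qed.

End cosine_polynomials.

Section series_tails.
Context {R : realType}.
Implicit Types (u b : nat -> R).

Definition tail u (N : nat) : R := limn (fun n => \sum_(N <= k < n) u k).

Lemma tailE u N : cvgn (series u) -> tail u N = limn (series u) - series u N.
Proof.
move=> u_cvg; apply: cvg_lim => //.
apply: cvg_trans (cvgB u_cvg (cvg_cst (series u N))); apply: near_eq_cvg.
exists N => // n /= Nn.
by rewrite /series /= !fctE (big_cat_nat (leq0n N) Nn) /= addrC addKr.
Qed.

Lemma tail_cvg0 u : cvgn (series u) -> tail u @ \oo --> 0.
Proof.
move=> u_cvg; rewrite -(subrr (limn (series u))).
apply: cvg_trans (cvgB (cvg_cst _) u_cvg); apply: near_eq_cvg.
by near=> N; rewrite tailE.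
Unshelve. all: by end_near.
Qed.

Lemma ler_norm_tail u b N :
  cvgn (series u) -> cvgn (series b) -> (forall j, `|u j| <= b j) ->
  `|limn (series u) - series u N| <= tail b N.
Proof.
move=> u_cvg b_cvg ub; rewrite -tailE // -lim_norm; last first.
  by rewrite is_cvg_series_restrict.
apply: ler_lim; first by apply: is_cvg_norm; rewrite is_cvg_series_restrict.
  by rewrite is_cvg_series_restrict.
near=> n; apply: le_trans (ler_norm_sum _ _ _) _.
by apply: ler_sum => j _.
Unshelve. all: by end_near.
Qed.

Lemma tail_le_bound u N (B : R) : (forall k, 0 <= u k) ->
  (forall n, \sum_(N <= k < n) u k <= B) -> tail u N <= B.
Proof.
move=> u_ge0 sum_le; apply: limr_le; last by near=> n; apply: sum_le.
apply: nondecreasing_is_cvgn; last by exists B => _ [n _ <-].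
move=> n m nm; case: (leqP N n) => Nn.
  by rewrite (big_cat_nat Nn nm) /= lerDl sumr_ge0.
by rewrite big_geq ?(ltnW Nn) // sumr_ge0.
Unshelve. all: by end_near.
Qed.

End series_tails.

Section chebyshev_series.
Variables (R : realType) (a : nat -> R).

Definition cheb_term (x : R) (j : nat) : R := 2 ^+ j / 2 * a j * (chebQ R j).[x].

Definition cheb_series (x : R) : R := limn (series (cheb_term x)).

Definition cheb_partial (N : nat) : {poly R} :=
  \sum_(j < N) (2 ^+ j / 2 * a j) *: chebQ R j.

Lemma cheb_term_cos (t : R) j : (0 < j)%N -> cheb_term (cos t) j = a j * cos (j%:R * t).
Proof.
move=> j_gt0; rewrite /cheb_term chebQ_cos //.
by field; rewrite expf_neq0.
Qed.

Lemma norm_cheb_term_le x j : -1 <= x <= 1 -> `|cheb_term x j| <= `|a j|.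
Proof.
move=> x_bound; case: j => [|j].
  rewrite /cheb_term /chebQ hornerC expr0 mulr1 mul1r normrM ger0_norm //.
  by rewrite ler_piMl // invf_le1 ?ler1n.
have [_ <-] := acos_def x_bound.
by rewrite cheb_term_cos // normrM ler_piMr ?cos_max.
Qed.

Lemma size_cheb_partial N : (size (cheb_partial N) <= N)%N.
Proof.
apply: (big_ind (fun q : {poly R} => (size q <= N)%N)) => [|p q|j _].
- by rewrite size_poly0.
- by move=> pN qN; apply: leq_trans (size_polyD _ _) _; rewrite geq_max pN qN.
- exact: leq_trans (size_scale_leq _ _) (leq_trans (size_chebQ R j) (ltn_ord j)).
Qed.

Lemma cheb_partialE N x : (cheb_partial N).[x] = series (cheb_term x) N.
Proof.
rewrite horner_sum /series /= big_mkord.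
by apply: eq_bigr => j _; rewrite hornerZ.
Qed.

Hypothesis a_abs_summable : cvgn (series (fun j => `|a j|)).

Lemma cheb_series_norm_cvg x : -1 <= x <= 1 ->
  cvgn (series (fun j => `|cheb_term x j|)).
Proof.
move=> x_bound; apply: (series_le_cvg _ _ _ a_abs_summable) => // j.
exact: norm_cheb_term_le.
Qed.

Lemma dist_cheb_partial_le N x : -1 <= x <= 1 ->
  `|(cheb_partial N).[x] - cheb_series x| <= tail (fun j => `|a j|) N.
Proof.
move=> x_bound; rewrite cheb_partialE distrC.
apply: ler_norm_tail => [||j]; last exact: norm_cheb_term_le.
- exact/normed_cvg/cheb_series_norm_cvg.
- exact: a_abs_summable.
Qed.

Lemma cheb_error_cos_sum (p : {poly R}) D N :
  (0 < D)%N -> (size p <= D)%N -> (D <= N)%N ->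
  exists d : nat -> R, forall t, p.[cos t] - series (cheb_term (cos t)) N =
    \sum_(j < N) (if (j < D)%N then d j else - a j) * cos (j%:R * t).
Proof.
move=> D_gt0 pD DN.
have [d hd] : cos_poly D (fun t => (p - cheb_partial D).[cos t]).
  apply: cos_poly_horner; apply: leq_trans (size_polyD _ _) _.
  by rewrite size_polyN geq_max pD size_cheb_partial.
exists d => t; rewrite /series /=.
rewrite -(big_mkord xpredT (fun j => (if (j < D)%N then d j else - a j) * cos (j%:R * t))).
rewrite !(big_cat_nat (leq0n D) DN) /=.
have -> : \sum_(0 <= j < D) (if (j < D)%N then d j else - a j) * cos (j%:R * t) =
    p.[cos t] - \sum_(0 <= j < D) cheb_term (cos t) j.
  rewrite big_mkord (eq_bigr (fun j : 'I_D => d j * cos (j%:R * t))) => [|j _].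
    by rewrite -hd hornerD hornerN cheb_partialE.
  by rewrite ltn_ord.
have -> : \sum_(D <= j < N) (if (j < D)%N then d j else - a j) * cos (j%:R * t) =
    - \sum_(D <= j < N) cheb_term (cos t) j.
  rewrite -sumrN; apply: eq_big_nat => j /andP[Dj _].
  by rewrite ltnNge Dj cheb_term_cos ?mulNr //; lia.
by rewrite opprD addrA.
Qed.

Lemma sum_sqr_coef_le_approx (p : {poly R}) D (M : R) :
  (0 < D)%N -> (size p <= D)%N ->
  (forall x, -1 <= x <= 1 -> `|p.[x] - cheb_series x| <= M) ->
  forall K, \sum_(D <= k < K) a k ^+ 2 <= 2 * M ^+ 2.
Proof.
move=> D_gt0 pD pM K; rewrite expr2; set tau := tail (fun j => `|a j|).
have approx N : (K <= N)%N -> (D <= N)%N ->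
    \sum_(D <= k < K) a k ^+ 2 <= 2 * ((M + tau N) * (M + tau N)).
  move=> KN DN; have [d err] := cheb_error_cos_sum _ _ _ D_gt0 pD DN.
  set c := fun j => if (j < D)%N then d j else - a j.
  have c_bound t : `|\sum_(j < N) c j * cos (j%:R * t)| <= M + tau N.
    have cos_bound : -1 <= cos t <= 1 by rewrite -ler_norml cos_max.
    rewrite -err -(subrK (cheb_series (cos t)) p.[cos t]) -addrA.
    apply: le_trans (ler_normD _ _) _; apply: lerD; first exact: pM.
    by rewrite -cheb_partialE distrC dist_cheb_partial_le.
  rewrite -expr2; apply: le_trans _ (sum_sqr_le_cos_sum_bound _ _ _ c_bound).
  case: (leqP D K) => DK.
    rewrite -(big_mkord xpredT (fun j => c j ^+ 2)) (big_cat_nat (leq0n D) DN).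
    rewrite (big_cat_nat DK KN) /=.
    have -> : \sum_(D <= k < K) c k ^+ 2 = \sum_(D <= k < K) a k ^+ 2.
      by apply: eq_big_nat => k /andP[Dk _]; rewrite /c ltnNge Dk sqrrN.
    by rewrite addrCA lerDl addr_ge0 // sumr_ge0 // => j _; rewrite sqr_ge0.
  by rewrite big_geq ?(ltnW DK) // sumr_ge0 // => j _; rewrite sqr_ge0.
have tau_cvg : (fun N => 2 * ((M + tau N) * (M + tau N))) @ \oo --> 2 * (M * M).
  have M_tau : (fun N => M + tau N) @ \oo --> M.
    by rewrite -[X in _ --> X]addr0; apply: cvgD (cvg_cst _) (tail_cvg0 _ a_abs_summable).
  exact: cvgM (cvg_cst _) (cvgM M_tau M_tau).
rewrite -(cvg_lim _ tau_cvg) //; apply: limr_ge; first exact: cvgP tau_cvg.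
near=> N; apply: approx; near: N; exact: nbhs_infty_ge.
Unshelve. all: by end_near.
Qed.

Lemma sqrt_tail_sqr_div_le_sup (p : {poly R}) D : (0 < D)%N -> (size p <= D)%N ->
  ((Num.sqrt (2^-1 * tail (fun k => a k ^+ 2 / k%:R) D))%:E <=
   ereal_sup [set (`|p.[x] - cheb_series x|)%:E | x in [set x : R | (-1 <= x <= 1)%R]])%E.
Proof.
move=> D_gt0 pD; set S := ereal_sup _.
have x0 : -1 <= (0 : R) <= 1 by rewrite lerN10 ler01.
have le_S x : -1 <= x <= 1 -> ((`|p.[x] - cheb_series x|)%:E <= S)%E.
  by move=> x_bound; apply: ereal_sup_ubound; exists x.
case: S le_S => [r| |] le_S; last 2 first.
- by rewrite leey.
- by have := le_S 0 x0; rewrite leeNy_eq.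
have le_r x : -1 <= x <= 1 -> `|p.[x] - cheb_series x| <= r.
  by move=> x_bound; rewrite -lee_fin le_S.
have r_ge0 : 0 <= r := le_trans (normr_ge0 _) (le_r 0 x0).
have tail_le : tail (fun k => a k ^+ 2 / k%:R) D <= 2 * r ^+ 2.
  apply: tail_le_bound => [k|n]; first by rewrite divr_ge0 ?sqr_ge0.
  apply: le_trans _ (sum_sqr_coef_le_approx _ _ _ D_gt0 pD le_r n).
  apply: ler_sum_nat => k /andP[Dk _].
  by rewrite ler_pdivrMr ?ler_peMr ?sqr_ge0 ?ler1n ?ltr0n //; lia.
rewrite lee_fin -[r in _ <= r]ger0_norm // -sqrtr_sqr ler_wsqrtr //; nra.
Qed.

End chebyshev_series.

Theorem proposition2p2 (R : realType) (a : nat -> R)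
  (ha : cvgn (series (fun j => `|a j|))) :
  (forall x : R, -1 <= x <= 1 ->
     cvgn (series (fun j => `|2 ^+ j / 2 * a j * (chebQ R j).[x]|))) /\
  (forall D : nat, (1 <= D)%N ->
     let f := fun x : R =>
       limn (series (fun j => 2 ^+ j / 2 * a j * (chebQ R j).[x])) in
     let E : \bar R :=
       ereal_inf [set ereal_sup [set (`|p.[x] - f x|)%:E
                                | x in [set x : R | -1 <= x <= 1]]
                 | p in [set p : {poly R} | (size p <= D)%N]] in
     ((Num.sqrt (2^-1 * limn (fun n => \sum_(D <= k < n) (a k ^+ 2 / k%:R))))%:E
        <= E)%E /\
     (E <= (limn (fun n => \sum_(D <= j < n) `|a j|))%:E)%E).
Proof.
split=> [x x_bound|D D_gt0 f E]; first exact: cheb_series_norm_cvg.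
split.
- by apply/ereal_infP => _ [p pD <-]; apply: sqrt_tail_sqr_div_le_sup.
- have pD := size_cheb_partial R a D.
  apply: le_trans; first by apply: ereal_inf_lbound; exists (cheb_partial R a D).
  apply/ereal_supP => _ [x x_bound <-]; rewrite lee_fin.
  exact: dist_cheb_partial_le.
Qed.
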